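(* Let $(E,P,\vartheta)$ be a complete bipolar metric space and let $F\colon E\cup P\to E\cup P$ with $F(E)\subseteq E$, $F(P)\subseteq P$ be a polynomial contraction, i.e. there exist $\pi\in(0,1)$, an integer $\sigma\geq1$ and functions $q_\upsilon\colon E\times P\to[0,\infty)$, $\upsilon=0,\dots,\sigma$, such that $$\sum_{\upsilon=0}^{\sigma} q_\upsilon(Fe,Ff)\,\vartheta^\upsilon(Fe,Ff)\leq \pi\sum_{\upsilon=0}^{\sigma} q_\upsilon(e,f)\,\vartheta^\upsilon(e,f)\quad\text{for all } e\in E,\ f\in P.$$ Assume (i) $F$ is Picard-continuous, and (ii) there exist $\varrho\in\{1,\dots,\sigma\}$ and $Q_\varrho>0$ with $q_\varrho(e,f)\geq Q_\varrho$ for all $e\in E$, $f\in P$. Then $F$ has a unique fixed point.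
   Context: A bipolar metric space is a triple $(E,P,\vartheta)$ where $E,P$ are nonempty sets and $\vartheta\colon E\times P\to[0,\infty)$ satisfies: (1) for $e\in E$, $f\in P$, $\vartheta(e,f)=0$ iff $e=f$; (2) $\vartheta(e,f)=\vartheta(f,e)$ whenever $e,f\in E\cap P$; (3) $\vartheta(e,f)\leq\vartheta(e,z)+\vartheta(r,z)+\vartheta(r,f)$ for all $e,r\in E$, $z,f\in P$. A sequence $(x_n)$ in $E$ converges to $y\in P$ if $\vartheta(x_n,y)\to0$; a sequence $(y_n)$ in $P$ converges to $x\in E$ if $\vartheta(x,y_n)\to0$. A bisequence $(x_n,y_n)$ with $x_n\in E$, $y_n\in P$ is Cauchy if for every $\varepsilon>0$ there is $N$ with $\vartheta(x_n,y_m)<\varepsilon$ for all $n,m\geq N$; the space is complete if every Cauchy bisequence is convergent. $F$ is Picard-continuous if for all $g\in E$, $h\in P$: $\lim_{n\to\infty}\vartheta(F^n g,h)=0$ implies $\lim_{n\to\infty}\vartheta(F(F^ng),Fh)=0$, where $F^0g=g$, $F^{n+1}g=F(F^ng)$. $\vartheta^\upsilon$ denotes the $\upsilon$-th power of $\vartheta$, with $\vartheta^0\equiv1$. A fixed point of $F$ is a point $g$ with $Fg=g$. *)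

From Stdlib Require Import Reals.
Open Scope R_scope.

(* A bipolar metric space (E,P,d): E and P are nonempty subsets (predicates) of
   an ambient type X (so that E ∩ P and E ∪ P make sense); d is only
   meaningful on E × P. *)
Definition bipolar_metric {X : Type} (E P : X -> Prop) (d : X -> X -> R) : Prop :=
  (exists e, E e) /\ (exists p, P p) /\
  (forall e f, E e -> P f -> 0 <= d e f) /\
  (forall e f, E e -> P f -> (d e f = 0 <-> e = f)) /\
  (forall e f, E e -> P e -> E f -> P f -> d e f = d f e) /\
  (forall e r z f, E e -> E r -> P z -> P f ->
     d e f <= d e z + d r z + d r f).

Definition conv_EP {X : Type} (d : X -> X -> R) (x : nat -> X) (y : X) : Prop :=
  Un_cv (fun n => d (x n) y) 0.

Definition conv_PE {X : Type} (d : X -> X -> R) (y : nat -> X) (x : X) : Prop :=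
  Un_cv (fun n => d x (y n)) 0.

Definition cauchy_bisequence {X : Type} (d : X -> X -> R) (x y : nat -> X) : Prop :=
  forall eps, eps > 0 -> exists N, forall n m, (n >= N)%nat -> (m >= N)%nat ->
    d (x n) (y m) < eps.

Definition convergent_bisequence {X : Type} (E P : X -> Prop) (d : X -> X -> R)
  (x y : nat -> X) : Prop :=
  (exists q, P q /\ conv_EP d x q) /\ (exists p, E p /\ conv_PE d y p).

Definition bipolar_complete {X : Type} (E P : X -> Prop) (d : X -> X -> R) : Prop :=
  forall x y : nat -> X, (forall n, E (x n)) -> (forall n, P (y n)) ->
    cauchy_bisequence d x y -> convergent_bisequence E P d x y.

Fixpoint iter_map {X : Type} (F : X -> X) (n : nat) (g : X) : X :=
  match n with
  | O => g
  | S k => F (iter_map F k g)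
  end.

Definition picard_continuous {X : Type} (E P : X -> Prop) (d : X -> X -> R)
  (F : X -> X) : Prop :=
  forall g h, E g -> P h ->
    Un_cv (fun n => d (iter_map F n g) h) 0 ->
    Un_cv (fun n => d (F (iter_map F n g)) (F h)) 0.

Definition poly_sum {X : Type} (d : X -> X -> R) (q : nat -> X -> X -> R)
  (sigma : nat) (e f : X) : R :=
  sum_f_R0 (fun u => q u e f * (d e f) ^ u) sigma.

Definition polynomial_contraction {X : Type} (E P : X -> Prop) (d : X -> X -> R)
  (F : X -> X) (pi : R) (sigma : nat) (q : nat -> X -> X -> R) : Prop :=
  0 < pi < 1 /\ (1 <= sigma)%nat /\
  (forall u e f, (u <= sigma)%nat -> E e -> P f -> 0 <= q u e f) /\
  (forall e f, E e -> P f ->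
     poly_sum d q sigma (F e) (F f) <= pi * poly_sum d q sigma e f).

(* Since [q_rho >= Q], the polynomial [S(e,f) = sum_u q_u(e,f) d(e,f)^u] dominates
   [Q d(e,f)^rho], while [S] shrinks by the factor [pi] under [F]; hence
   [d(F^n e, F^n f) <= c t^n] with [t = pi^(1/rho) < 1].  Applied to the pairs
   [(e,f)], [(F e,f)] and [(e,F f)], this bounds the distances between consecutive
   terms of the Picard bisequence geometrically, so the quadrilateral inequality
   makes it Cauchy.  Its limit is a fixed point by Picard continuity, and a pair
   of fixed points [(e,f)] satisfies [S(e,f) <= pi S(e,f)], forcing [d(e,f) = 0]. *)

From Stdlib Require Import Reals Lra Lia.
Open Scope R_scope.

Lemma sum_f_R0_nonneg (f : nat -> R) (n : nat) :
  (forall i, (i <= n)%nat -> 0 <= f i) -> 0 <= sum_f_R0 f n.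
Proof.
  induction n as [|n IH]; intros Hf; simpl.
  - apply Hf; lia.
  - assert (0 <= f (S n)) by (apply Hf; lia).
    assert (0 <= sum_f_R0 f n) by (apply IH; intros; apply Hf; lia).
    lra.
Qed.

Lemma sum_f_R0_ge_term (f : nat -> R) (n k : nat) :
  (forall i, (i <= n)%nat -> 0 <= f i) -> (k <= n)%nat -> f k <= sum_f_R0 f n.
Proof.
  induction n as [|n IH]; intros Hf Hk; simpl.
  - replace k with 0%nat by lia. lra.
  - assert (0 <= f (S n)) by (apply Hf; lia).
    destruct (Nat.eq_dec k (S n)) as [->|Hne].
    + assert (0 <= sum_f_R0 f n) by (apply sum_f_R0_nonneg; intros; apply Hf; lia).
      lra.
    + assert (f k <= sum_f_R0 f n) by (apply IH; [intros; apply Hf; lia | lia]).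
      lra.
Qed.

Lemma pow_lt_compat_l (x y : R) (n : nat) :
  0 <= x < y -> (1 <= n)%nat -> x ^ n < y ^ n.
Proof.
  intros Hxy Hn. induction n as [|n IH]; [lia|].
  destruct (Nat.eq_dec n 0) as [->|Hn0]; simpl; [lra|].
  assert (x ^ n < y ^ n) by (apply IH; lia).
  assert (0 <= x ^ n) by (apply pow_le; lra).
  nra.
Qed.

Lemma pow_le_cancel_l (x y : R) (n : nat) :
  0 <= y -> (1 <= n)%nat -> x ^ n <= y ^ n -> x <= y.
Proof.
  intros Hy Hn Hpow. destruct (Rle_or_lt x y) as [|Hyx]; [assumption|].
  pose proof (pow_lt_compat_l y x n (conj Hy Hyx) Hn). lra.
Qed.

Lemma Rpower_inv_INR_pow (z : R) (n : nat) :
  0 < z -> (1 <= n)%nat -> Rpower z (/ INR n) ^ n = z.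
Proof.
  intros Hz Hn.
  rewrite <- Rpower_pow by (unfold Rpower; apply exp_pos).
  rewrite Rpower_mult, Rinv_l by (apply not_0_INR; lia).
  apply Rpower_1, Hz.
Qed.

Lemma Rpower_inv_INR_lt_1 (z : R) (n : nat) :
  0 < z < 1 -> (1 <= n)%nat -> Rpower z (/ INR n) < 1.
Proof.
  intros Hz Hn.
  replace 1 with (Rpower 1 (/ INR n))
    by (unfold Rpower; rewrite ln_1, Rmult_0_r; apply exp_0).
  apply Rlt_Rpower_l; [|lra].
  apply Rinv_0_lt_compat, lt_0_INR; lia.
Qed.

Lemma le_geometric_of_pow_le (x A t : R) (k n : nat) :
  0 < A -> 0 < t -> (1 <= k)%nat -> x ^ k <= t ^ n * A ->
  x <= Rpower A (/ INR k) * Rpower t (/ INR k) ^ n.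
Proof.
  intros HA Ht Hk Hx.
  apply (pow_le_cancel_l _ _ k); [| exact Hk |].
  - apply Rmult_le_pos; [|apply pow_le]; unfold Rpower; left; apply exp_pos.
  - rewrite Rpow_mult_distr, <- pow_mult, Nat.mul_comm, pow_mult,
      !Rpower_inv_INR_pow by assumption.
    lra.
Qed.

(* [C = 2 c / (1 - t)] solves [2 c + C t = C], so the bound [C t^n] propagates
   through the recursion. *)
Lemma geometric_recursion_bound (a : nat -> nat -> R) (c t : R) :
  0 <= c -> 0 < t < 1 ->
  (forall n, a n 0%nat <= c * t ^ n) ->
  (forall n j, a n (S j) <= 2 * c * t ^ n + a (S n) j) ->
  forall j n, a n j <= 2 * c / (1 - t) * t ^ n.
Proof.
  intros Hc Ht Hbase Hstep.
  set (C := 2 * c / (1 - t)).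
  assert (HC : C * (1 - t) = 2 * c) by (unfold C; field; lra).
  assert (HcC : c <= C) by nra.
  induction j as [|j IH]; intros n; assert (0 <= t ^ n) by (apply pow_le; lra).
  - specialize (Hbase n). nra.
  - specialize (Hstep n j). specialize (IH (S n)). simpl in IH. nra.
Qed.

Lemma geometric_eventually_lt (C t eps : R) :
  0 < t < 1 -> 0 < eps -> exists N, forall n, (n >= N)%nat -> C * t ^ n < eps.
Proof.
  intros Ht Heps.
  assert (HC : 0 < Rabs C + 1) by (pose proof (Rabs_pos C); lra).
  destruct (pow_lt_1_zero t ltac:(rewrite Rabs_right; lra) (eps / (Rabs C + 1))
    ltac:(apply Rdiv_lt_0_compat; lra)) as [N HN].
  exists N. intros n Hn. specialize (HN n Hn).
  assert (0 <= t ^ n) by (apply pow_le; lra).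
  rewrite Rabs_right in HN by lra.
  apply (Rmult_lt_compat_l (Rabs C + 1)) in HN; [|assumption].
  replace ((Rabs C + 1) * (eps / (Rabs C + 1))) with eps in HN by (field; lra).
  pose proof (Rle_abs C). nra.
Qed.

Lemma le0_of_le_null (a : R) (u : nat -> R) :
  (forall n, a <= u n) -> Un_cv u 0 -> a <= 0.
Proof.
  intros Hle Hu. destruct (Rle_or_lt a 0) as [|Ha]; [assumption|].
  destruct (Hu a Ha) as [N HN].
  specialize (HN N (le_n N)). specialize (Hle N).
  unfold R_dist in HN. rewrite Rminus_0_r in HN.
  pose proof (Rle_abs (u N)). lra.
Qed.

Lemma iter_map_succ_r {X : Type} (F : X -> X) (n : nat) (g : X) :
  iter_map F (S n) g = iter_map F n (F g).
Proof. induction n as [|n IH]; simpl; [reflexivity|]. simpl in IH. now rewrite IH. Qed.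

Lemma iter_map_stable {X : Type} (A : X -> Prop) (F : X -> X) (n : nat) (g : X) :
  (forall e, A e -> A (F e)) -> A g -> A (iter_map F n g).
Proof. intros HF Hg. induction n; simpl; auto. Qed.

Section BipolarMetric.

Variables (X : Type) (E P : X -> Prop) (d : X -> X -> R).
Hypothesis Hd : bipolar_metric E P d.

Lemma bipolar_nonneg e f : E e -> P f -> 0 <= d e f.
Proof. destruct Hd as (_ & _ & Hnn & _). apply Hnn. Qed.

Lemma bipolar_self e : E e -> P e -> d e e = 0.
Proof. destruct Hd as (_ & _ & _ & Hz & _). intros He Hp. now apply Hz. Qed.

Lemma bipolar_quad e r z f : E e -> E r -> P z -> P f ->
  d e f <= d e z + d r z + d r f.
Proof. destruct Hd as (_ & _ & _ & _ & _ & Hquad). apply Hquad. Qed.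

Lemma bipolar_le0_eq e f : E e -> P f -> d e f <= 0 -> e = f.
Proof.
  destruct Hd as (_ & _ & _ & Hz & _). intros He Hf Hle.
  apply Hz; [assumption | assumption |].
  pose proof (bipolar_nonneg e f He Hf). lra.
Qed.

Section Bisequence.

Variables (x y : nat -> X).
Hypotheses (Hx : forall n, E (x n)) (Hy : forall n, P (y n)).

Lemma geometric_bisequence_cauchy (c t : R) :
  0 <= c -> 0 < t < 1 ->
  (forall n, d (x n) (y n) <= c * t ^ n) ->
  (forall n, d (x (S n)) (y n) <= c * t ^ n) ->
  (forall n, d (x n) (y (S n)) <= c * t ^ n) ->
  cauchy_bisequence d x y.
Proof.
  intros Hc Ht Hdiag Hsub Hsup.
  assert (Hdecr : forall n, c * t ^ S n <= c * t ^ n).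
  { intros n. simpl.
    assert (0 <= c * t ^ n) by (apply Rmult_le_pos; [|apply pow_le]; lra). nra. }
  assert (Hfwd : forall j n, d (x n) (y (n + j)%nat) <= 2 * c / (1 - t) * t ^ n).
  { apply (geometric_recursion_bound (fun n j => d (x n) (y (n + j)%nat)));
      [assumption | assumption | |].
    - intros n. rewrite Nat.add_0_r. apply Hdiag.
    - intros n j. rewrite Nat.add_succ_r, <- Nat.add_succ_l.
      pose proof (bipolar_quad (x n) (x (S n)) (y (S n)) (y (S n + j)%nat)
        (Hx _) (Hx _) (Hy _) (Hy _)).
      pose proof (Hsup n). pose proof (Hdiag (S n)). pose proof (Hdecr n). lra. }
  assert (Hbwd : forall j m, d (x (m + j)%nat) (y m) <= 2 * c / (1 - t) * t ^ m).
  { apply (geometric_recursion_bound (fun m j => d (x (m + j)%nat) (y m)));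
      [assumption | assumption | |].
    - intros m. rewrite Nat.add_0_r. apply Hdiag.
    - intros m j. rewrite Nat.add_succ_r, <- Nat.add_succ_l.
      pose proof (bipolar_quad (x (S m + j)%nat) (x (S m)) (y (S m)) (y m)
        (Hx _) (Hx _) (Hy _) (Hy _)).
      pose proof (Hsub m). pose proof (Hdiag (S m)). pose proof (Hdecr m). lra. }
  intros eps Heps.
  destruct (geometric_eventually_lt (2 * c / (1 - t)) t eps Ht Heps) as [N HN].
  exists N. intros n m Hn Hm. destruct (Nat.le_ge_cases n m).
  - replace m with (n + (m - n))%nat by lia.
    eapply Rle_lt_trans; [apply Hfwd | apply HN, Hn].
  - replace n with (m + (n - m))%nat by lia.
    eapply Rle_lt_trans; [apply Hbwd | apply HN, Hm].
Qed.

Lemma cauchy_bisequence_diag_null :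
  cauchy_bisequence d x y -> Un_cv (fun n => d (x n) (y n)) 0.
Proof.
  intros Hcauchy eps Heps. destruct (Hcauchy eps Heps) as [N HN].
  exists N. intros n Hn. unfold R_dist. rewrite Rminus_0_r.
  rewrite Rabs_right by (apply Rle_ge, bipolar_nonneg; auto).
  now apply HN.
Qed.

Lemma bisequence_limits_eq (p q : X) : E p -> P q ->
  cauchy_bisequence d x y -> conv_EP d x q -> conv_PE d y p -> p = q.
Proof.
  intros Hp Hq Hcauchy Hxq Hyp.
  apply bipolar_le0_eq; [assumption | assumption |].
  apply (le0_of_le_null _ (fun n => d p (y n) + d (x n) (y n) + d (x n) q)).
  - intros n. apply bipolar_quad; auto.
  - replace 0 with (0 + 0 + 0) by ring.
    apply CV_plus; [apply CV_plus|]; auto using cauchy_bisequence_diag_null.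
Qed.

End Bisequence.

Lemma picard_limit_fixed (F : X -> X) (g p : X) :
  (forall e, E e -> E (F e)) -> (forall f, P f -> P (F f)) ->
  picard_continuous E P d F -> E g -> E p -> P p ->
  conv_EP d (fun n => iter_map F n g) p -> F p = p.
Proof.
  intros HFE HFP Hpic Hg Hp Hp' Hconv.
  assert (Hiter : forall n, E (iter_map F n g)) by (intros; apply iter_map_stable; auto).
  symmetry. apply bipolar_le0_eq; [assumption | auto |].
  apply (le0_of_le_null _
    (fun n => d (iter_map F (S n) g) p + d (iter_map F (S n) g) (F p))).
  - intros n. pose proof (bipolar_self p Hp Hp').
    pose proof (bipolar_quad p (iter_map F (S n) g) p (F p) Hp (Hiter _) Hp' (HFP _ Hp')).
    lra.
  - replace 0 with (0 + 0) by ring. apply CV_plus.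
    + intros eps Heps. destruct (Hconv eps Heps) as [N HN].
      exists N. intros n Hn. apply HN. lia.
    + exact (Hpic g p Hg Hp' Hconv).
Qed.

End BipolarMetric.

Section PolynomialContraction.

Variables (X : Type) (E P : X -> Prop) (d : X -> X -> R) (F : X -> X).
Variables (pi : R) (sigma : nat) (q : nat -> X -> X -> R) (rho : nat) (Q : R).
Hypotheses (Hd : bipolar_metric E P d)
  (HFE : forall e, E e -> E (F e)) (HFP : forall f, P f -> P (F f))
  (Hcontr : polynomial_contraction E P d F pi sigma q)
  (Hrho : (1 <= rho <= sigma)%nat) (HQ : 0 < Q)
  (HqQ : forall e f, E e -> P f -> q rho e f >= Q).

Lemma poly_sum_terms_nonneg e f : E e -> P f ->
  forall u, (u <= sigma)%nat -> 0 <= q u e f * d e f ^ u.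
Proof.
  destruct Hcontr as (_ & _ & Hq & _). intros He Hf u Hu.
  apply Rmult_le_pos; [apply Hq; auto | apply pow_le, (bipolar_nonneg _ _ _ _ Hd); auto].
Qed.

Lemma poly_sum_nonneg e f : E e -> P f -> 0 <= poly_sum d q sigma e f.
Proof. intros He Hf. now apply sum_f_R0_nonneg, poly_sum_terms_nonneg. Qed.

Lemma poly_sum_ge_pow e f : E e -> P f -> Q * d e f ^ rho <= poly_sum d q sigma e f.
Proof.
  intros He Hf.
  assert (q rho e f * d e f ^ rho <= poly_sum d q sigma e f).
  { apply (sum_f_R0_ge_term (fun u => q u e f * d e f ^ u));
      [now apply poly_sum_terms_nonneg | lia]. }
  assert (0 <= d e f ^ rho) by (apply pow_le, (bipolar_nonneg _ _ _ _ Hd); auto).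
  specialize (HqQ e f He Hf). nra.
Qed.

Lemma poly_sum_iter_le n e f : E e -> P f ->
  poly_sum d q sigma (iter_map F n e) (iter_map F n f) <= pi ^ n * poly_sum d q sigma e f.
Proof.
  destruct Hcontr as (Hpi & _ & _ & Hstep). intros He Hf.
  induction n as [|n IH]; simpl; [lra|].
  pose proof (Hstep _ _ (iter_map_stable E F n e HFE He) (iter_map_stable P F n f HFP Hf)).
  nra.
Qed.

Lemma dist_iter_le_geometric (A : R) n e f : E e -> P f -> 0 < A ->
  poly_sum d q sigma e f <= A ->
  d (iter_map F n e) (iter_map F n f)
    <= Rpower (A / Q) (/ INR rho) * Rpower pi (/ INR rho) ^ n.
Proof.
  destruct Hcontr as (Hpi & _). intros He Hf HA HeA.
  apply le_geometric_of_pow_le; [apply Rdiv_lt_0_compat; lra | lra | lia |].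
  pose proof (poly_sum_iter_le n e f He Hf).
  pose proof (poly_sum_ge_pow _ _ (iter_map_stable E F n e HFE He)
    (iter_map_stable P F n f HFP Hf)).
  assert (0 <= pi ^ n) by (apply pow_le; lra).
  apply (Rmult_le_reg_l Q); [assumption|].
  replace (Q * (pi ^ n * (A / Q))) with (pi ^ n * A) by (field; lra).
  nra.
Qed.

Lemma picard_bisequence_cauchy e f : E e -> P f ->
  cauchy_bisequence d (fun n => iter_map F n e) (fun n => iter_map F n f).
Proof.
  destruct Hcontr as (Hpi & _). intros He Hf.
  pose proof (poly_sum_nonneg e f He Hf).
  pose proof (poly_sum_nonneg (F e) f (HFE _ He) Hf).
  pose proof (poly_sum_nonneg e (F f) He (HFP _ Hf)).
  set (A := poly_sum d q sigma e f + poly_sum d q sigma (F e) f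
            + poly_sum d q sigma e (F f) + 1).
  apply (geometric_bisequence_cauchy _ E P d Hd _ _
    (fun n => iter_map_stable E F n e HFE He) (fun n => iter_map_stable P F n f HFP Hf)
    (Rpower (A / Q) (/ INR rho)) (Rpower pi (/ INR rho))).
  - left. unfold Rpower. apply exp_pos.
  - split; [unfold Rpower; apply exp_pos | apply Rpower_inv_INR_lt_1; [lra | lia]].
  - intros n. apply dist_iter_le_geometric; auto; unfold A; lra.
  - intros n. rewrite iter_map_succ_r.
    apply dist_iter_le_geometric; auto; unfold A; lra.
  - intros n. rewrite (iter_map_succ_r F n f).
    apply dist_iter_le_geometric; auto; unfold A; lra.
Qed.

Lemma fixed_points_eq e f : E e -> P f -> F e = e -> F f = f -> e = f.
Proof.
  destruct Hcontr as (Hpi & _ & _ & Hstep). intros He Hf Hfe Hff.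
  apply (bipolar_le0_eq _ E P d Hd); [assumption | assumption |].
  apply (pow_le_cancel_l _ _ rho); [lra | lia |].
  rewrite pow_i by lia.
  pose proof (Hstep e f He Hf) as Hshrink. rewrite Hfe, Hff in Hshrink.
  pose proof (poly_sum_nonneg e f He Hf). pose proof (poly_sum_ge_pow e f He Hf).
  assert (poly_sum d q sigma e f <= 0) by nra.
  nra.
Qed.

End PolynomialContraction.

Theorem theorem3p11 (X : Type) (E P : X -> Prop) (d : X -> X -> R) (F : X -> X)
  (pi : R) (sigma : nat) (q : nat -> X -> X -> R) :
  bipolar_metric E P d ->
  bipolar_complete E P d ->
  (forall e, E e -> E (F e)) ->
  (forall f, P f -> P (F f)) ->
  polynomial_contraction E P d F pi sigma q ->
  picard_continuous E P d F ->
  (exists (rho : nat) (Q : R), (1 <= rho <= sigma)%nat /\ 0 < Q /\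
     forall e f, E e -> P f -> q rho e f >= Q) ->
  exists g, (E g \/ P g) /\ F g = g /\
    forall g', (E g' \/ P g') -> F g' = g' -> g' = g.
Proof.
  intros Hd Hcomplete HFE HFP Hcontr Hpic (rho & Q & Hrho & HQ & HqQ).
  pose proof Hd as [[e0 He0] [[f0 Hf0] _]].
  pose proof (picard_bisequence_cauchy X E P d F pi sigma q rho Q
    Hd HFE HFP Hcontr Hrho HQ HqQ e0 f0 He0 Hf0) as Hcauchy.
  assert (Hx : forall n, E (iter_map F n e0)) by (intros; apply iter_map_stable; auto).
  assert (Hy : forall n, P (iter_map F n f0)) by (intros; apply iter_map_stable; auto).
  destruct (Hcomplete _ _ Hx Hy Hcauchy) as [[p [Hp Hxp]] [p' [Hp' Hyp]]].
  assert (p' = p) as ->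
    by exact (bisequence_limits_eq X E P d Hd _ _ Hx Hy p' p Hp' Hp Hcauchy Hxp Hyp).
  assert (Hfix : F p = p)
    by exact (picard_limit_fixed X E P d Hd F e0 p HFE HFP Hpic He0 Hp' Hp Hxp).
  exists p. split; [now left | split; [exact Hfix |]].
  intros g [Hg | Hg] Hgfix; [| symmetry];
    eapply (fixed_points_eq X E P d F pi sigma q rho Q); eauto.
Qed.
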